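(* Let $A\in\mathbb{C}^{n\times n}$ be Hermitian, $f(x)=\frac12\|xx^*-A\|_F^2$ with $\nabla f(x)=2(xx^*-A)x$, and $0<c_1<c_2<1/2$. Consider the Fletcher–Reeves conjugate gradient iteration: $x_0\in\mathbb{C}^{n\times p}_*$, $\eta_0=-\nabla f(x_0)$, $x_{k+1}=x_k+\alpha_k\eta_k$, $\eta_{k+1}=-\nabla f(x_{k+1})+\beta_{k+1}\eta_k$ with $\beta_{k+1}=\|\nabla f(x_{k+1})\|_F^2/\|\nabla f(x_k)\|_F^2$, where every $\alpha_k>0$ satisfies the strong Wolfe conditions $$f(x_k+\alpha_k\eta_k)\le f(x_k)+c_1\alpha_k\langle\nabla f(x_k),\eta_k\rangle,\qquad |\langle\nabla f(x_k+\alpha_k\eta_k),\eta_k\rangle|\le c_2|\langle\nabla f(x_k),\eta_k\rangle|,$$ and all iterates lie in $\mathbb{C}^{n\times p}_*$. If $\nabla f(x_k)\ne0$ for all $k$, then $$\liminf_{k\to\infty}\|\nabla f(x_k)\|_F=0.$$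
   Context: $\mathbb{C}^{n\times p}_*=\{X\in\mathbb{C}^{n\times p}:\operatorname{rank}X=p\}$; $\mathbb{C}^{n\times p}$ is a real vector space with inner product $\langle U,V\rangle=\Re\operatorname{tr}(U^*V)$ and induced norm $\|\cdot\|_F$. (The paper states this for the equivalent Riemannian Fletcher–Reeves CG on the quotient manifold $\mathbb{C}^{n\times p}_*/\mathcal O_p$ with metric $\Re\operatorname{tr}(U^*V)$, retraction $x\mapsto x+\tau\eta$, and differentiated-retraction vector transport; in horizontal-lift coordinates it is the iteration above.) *)

From HB Require Import structures.
From mathcomp Require Import all_boot all_order all_algebra.
From mathcomp Require Import all_classical all_reals all_analysis.
From mathcomp Require Import complex.

Set Implicit Arguments.
Unset Strict Implicit.
Unset Printing Implicit Defensive.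
Import Order.TTheory GRing.Theory Num.Theory.
Local Open Scope ring_scope.

Section CGDefs.
Variable R : realType.
Local Notation C := R[i].

Definition adj (n p : nat) (X : 'M[C]_(n, p)) : 'M[C]_(p, n) :=
  map_mx (@conjc R) X^T.

Definition ip (n p : nat) (U V : 'M[C]_(n, p)) : R :=
  complex.Re (\tr (adj U *m V)).

Definition frob (n p : nat) (U : 'M[C]_(n, p)) : R := Num.sqrt (ip U U).

Definition hermitianC (n : nat) (A : 'M[C]_n) : Prop := adj A = A.

(* full column rank: X in C^{n x p}_* *)
Definition fullrank (n p : nat) (X : 'M[C]_(n, p)) : Prop := \rank X = p.

Definition fcost (n p : nat) (A : 'M[C]_n) (X : 'M[C]_(n, p)) : R :=
  2^-1 * (frob (X *m adj X - A)) ^+ 2.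

Definition gradf (n p : nat) (A : 'M[C]_n) (X : 'M[C]_(n, p)) : 'M[C]_(n, p) :=
  2%:R *: ((X *m adj X - A) *m X).

Definition rscale (n p : nat) (r : R) (X : 'M[C]_(n, p)) : 'M[C]_(n, p) :=
  (r%:C)%C *: X.

End CGDefs.

From HB Require Import structures.
From mathcomp Require Import all_boot all_order all_algebra.
From mathcomp Require Import all_classical all_reals all_analysis.
From mathcomp Require Import complex.
From mathcomp Require Import ring lra.
Import Order.TTheory GRing.Theory Num.Theory.
Local Open Scope ring_scope.

Set Implicit Arguments.
Unset Strict Implicit.
Unset Printing Implicit Defensive.

(* The argument is Al-Baali's analysis of Fletcher–Reeves combined with
   Zoutendijk's condition.
   - C^(n x p) with <U,V> = Re tr(U^* V) is a real inner-product space: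
     Cauchy–Schwarz, the triangle inequality and submultiplicativity of the
     Frobenius norm (via Cauchy–Schwarz for complex sums).
   - f has bounded sublevel sets and grad f is Lipschitz on bounded sets.
   - Al-Baali's bound -sigma ||g_k||^2 <= <g_k, eta_k> <= (sigma - 2) ||g_k||^2,
     sigma = 1/(1 - c2) in (1, 2): every eta_k is a descent direction, so f
     decreases and the iterates stay in a fixed ball.
   - The curvature condition and the Lipschitz bound bound the steps from
     below; with the Armijo condition this gives Zoutendijk's estimate
     ||g_k||^4 / ||eta_k||^2 <= const (f(x_k) - f(x_(k+1))).
   - If ||g_k|| stayed away from 0, the FR recursion would give
     ||eta_k||^2 <= const (k + 1) ||g_k||^4, so f(x_0) - f(x_K) would dominate
     the divergent harmonic series, contradicting f >= 0. *)

Section ComplexDot.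
Variable R : realType.
Local Notation C := R[i].

Definition cdot (a b : C) : R :=
  complex.Re a * complex.Re b + complex.Im a * complex.Im b.

Definition cnorm2 (a : C) : R := cdot a a.

Lemma ReD (a b : C) : complex.Re (a + b) = complex.Re a + complex.Re b.
Proof. by case: a; case: b. Qed.

Lemma Re_conjM (a b : C) : complex.Re (conjc a * b) = cdot a b.
Proof. by case: a => a1 a2; case: b => b1 b2; rewrite /cdot /=; ring. Qed.

Lemma cdotC a b : cdot a b = cdot b a.
Proof. by rewrite /cdot; ring. Qed.

Lemma cdotDl a b c : cdot (a + b) c = cdot a c + cdot b c.
Proof. by case: a => ? ?; case: b => ? ?; case: c => ? ?; rewrite /cdot /=; ring. Qed.

Lemma cdotNl a c : cdot (- a) c = - cdot a c.
Proof. by case: a => ? ?; case: c => ? ?; rewrite /cdot /=; ring. Qed.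

Lemma cdotZl (r : R) a c : cdot ((r%:C)%C * a) c = r * cdot a c.
Proof. by case: a => ? ?; case: c => ? ?; rewrite /cdot /=; ring. Qed.

Lemma cnorm2_ge0 a : 0 <= cnorm2 a.
Proof. by rewrite /cnorm2 /cdot; nra. Qed.

Lemma cnorm2_eq0 a : cnorm2 a = 0 -> a = 0.
Proof.
case: a => a1 a2; rewrite /cnorm2 /cdot /= => h.
have -> : a1 = 0 by nra.
by have -> : a2 = 0 by nra.
Qed.

Lemma cnorm2M a b : cnorm2 (a * b) = cnorm2 a * cnorm2 b.
Proof. by case: a => ? ?; case: b => ? ?; rewrite /cnorm2 /cdot /=; ring. Qed.

Lemma cnorm2D a b : cnorm2 (a + b) = cnorm2 a + 2 * cdot a b + cnorm2 b.
Proof. by case: a => ? ?; case: b => ? ?; rewrite /cnorm2 /cdot /=; ring. Qed.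

(* Cauchy–Schwarz in C viewed as R^2 (via Lagrange's identity). *)
Lemma cdot_CS a b : cdot a b ^+ 2 <= cnorm2 a * cnorm2 b.
Proof.
case: a => a1 a2; case: b => b1 b2; rewrite /cnorm2 /cdot /=.
have -> : (a1 * a1 + a2 * a2) * (b1 * b1 + b2 * b2) =
  (a1 * b1 + a2 * b2) ^+ 2 + (a1 * b2 - a2 * b1) ^+ 2 by ring.
by rewrite lerDl sqr_ge0.
Qed.

Lemma csum_CS m (a b : 'I_m -> C) :
  cnorm2 (\sum_k a k * b k) <= (\sum_k cnorm2 (a k)) * (\sum_k cnorm2 (b k)).
Proof.
elim: m a b => [|m IH] a b; first by rewrite !big_ord0 /cnorm2 /cdot /=; lra.
rewrite !big_ord_recr /= cnorm2D cnorm2M.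
set S := \sum_(i < m) _; set SA := \sum_(i < m) _; set SB := \sum_(i < m) _.
set al := cnorm2 (a ord_max); set be := cnorm2 (b ord_max).
have hS : cnorm2 S <= SA * SB by exact: IH.
have hA : 0 <= SA by apply: sumr_ge0 => *; exact: cnorm2_ge0.
have hB : 0 <= SB by apply: sumr_ge0 => *; exact: cnorm2_ge0.
have ha : 0 <= al by exact: cnorm2_ge0.
have hb : 0 <= be by exact: cnorm2_ge0.
(* the cross term: 2 cdot S (a b) <= SA be + SB al by cdot_CS and AM-GM *)
have cross2 : cdot S (a ord_max * b ord_max) ^+ 2 <= (SA * SB) * (al * be).
  apply: le_trans (cdot_CS _ _) _; rewrite cnorm2M.
  by apply: ler_wpM2r; [exact: mulr_ge0|].
have amgm : 4 * (SA * SB) * (al * be) <= (SA * be + SB * al) ^+ 2.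
  by have := sqr_ge0 (SA * be - SB * al); nra.
have cross : 2 * cdot S (a ord_max * b ord_max) <= SA * be + SB * al.
  have hpos : 0 <= SA * be + SB * al by nra.
  nra.
nra.
Qed.
End ComplexDot.

Section FrobeniusGeometry.
Variable R : realType.
Local Notation C := R[i].

Lemma ipE n p (U V : 'M[C]_(n, p)) :
  ip U V = \sum_i \sum_k cdot (U k i) (V k i).
Proof.
rewrite /ip /mxtrace (big_morph _ (@ReD R) (erefl (complex.Re 0))).
apply: eq_bigr => i _; rewrite mxE (big_morph _ (@ReD R) (erefl (complex.Re 0))).
by apply: eq_bigr => k _; rewrite !mxE Re_conjM.
Qed.

Section InnerProduct.
Variables n p : nat.
Implicit Types U V W : 'M[C]_(n, p).

Lemma ipC U V : ip U V = ip V U.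
Proof. by rewrite !ipE; apply: eq_bigr => i _; apply: eq_bigr => k _; exact: cdotC. Qed.

Lemma ipDl U V W : ip (U + V) W = ip U W + ip V W.
Proof.
rewrite !ipE -big_split; apply: eq_bigr => i _; rewrite -big_split.
by apply: eq_bigr => k _; rewrite mxE cdotDl.
Qed.

Lemma ipNl U W : ip (- U) W = - ip U W.
Proof.
rewrite !ipE -sumrN; apply: eq_bigr => i _; rewrite -sumrN.
by apply: eq_bigr => k _; rewrite mxE cdotNl.
Qed.

Lemma ipZl r U W : ip (rscale r U) W = r * ip U W.
Proof.
rewrite !ipE mulr_sumr; apply: eq_bigr => i _; rewrite mulr_sumr.
by apply: eq_bigr => k _; rewrite /rscale mxE cdotZl.
Qed.

Lemma ipDr U V W : ip W (U + V) = ip W U + ip W V.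
Proof. by rewrite ipC ipDl !(ipC W). Qed.

Lemma ipNr U W : ip W (- U) = - ip W U.
Proof. by rewrite ipC ipNl ipC. Qed.

Lemma ipZr r U W : ip W (rscale r U) = r * ip W U.
Proof. by rewrite ipC ipZl ipC. Qed.

Lemma ipBl U V W : ip (U - V) W = ip U W - ip V W.
Proof. by rewrite ipDl ipNl. Qed.

Lemma ipBr U V W : ip W (U - V) = ip W U - ip W V.
Proof. by rewrite ipDr ipNr. Qed.

Lemma ip0r U : ip U 0 = 0.
Proof. by rewrite -(subrr U) ipBr subrr. Qed.

Lemma ip_ge0 U : 0 <= ip U U.
Proof. by rewrite ipE; do 2![apply: sumr_ge0 => ? _]; exact: cnorm2_ge0. Qed.

Lemma ip_eq0 U : ip U U = 0 -> U = 0.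
Proof.
rewrite ipE => /psumr_eq0P U0; apply/matrixP => k i; rewrite mxE.
have /psumr_eq0P col0 : \sum_k cdot (U k i) (U k i) = 0.
  by apply: U0 => // j _; apply: sumr_ge0 => ? _; exact: cnorm2_ge0.
by apply: cnorm2_eq0; apply: col0 => // ? _; exact: cnorm2_ge0.
Qed.

Lemma frob_ge0 U : 0 <= frob U.
Proof. exact: sqrtr_ge0. Qed.

Lemma frobE U : frob U ^+ 2 = ip U U.
Proof. by rewrite /frob sqr_sqrtr // ip_ge0. Qed.

Lemma frob_gt0 U : U != 0 -> 0 < frob U.
Proof.
move=> nzU; rewrite lt_neqAle frob_ge0 andbT; apply: contra nzU => /eqP U0.
by apply/eqP/ip_eq0; rewrite -frobE -U0 expr0n.
Qed.

(* Cauchy–Schwarz, squared form: expand <bU - aV, bU - aV> >= 0 with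
   a = <U,V>, b = <V,V>. *)
Lemma ip_CS2 U V : ip U V ^+ 2 <= ip U U * ip V V.
Proof.
have [->|nzV] := eqVneq V 0; first by rewrite !ip0r expr0n mulr0.
have bpos : 0 < ip V V by rewrite -frobE exprn_gt0 // frob_gt0.
have := ip_ge0 (rscale (ip V V) U - rscale (ip U V) V).
rewrite !(ipBl, ipBr, ipZl, ipZr) (ipC V U).
set a := ip U V; set b := ip V V; set c := ip U U => h.
nra.
Qed.

Lemma ip_norm_CS U V : `|ip U V| <= frob U * frob V.
Proof.
rewrite /frob -sqrtrM ?ip_ge0 // -sqrtr_sqr; apply: ler_wsqrtr; exact: ip_CS2.
Qed.

Lemma ip_CS U V : ip U V <= frob U * frob V.
Proof. exact: le_trans (ler_norm _) (ip_norm_CS U V). Qed.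

Lemma frobN U : frob (- U) = frob U.
Proof. by rewrite /frob ipNl ipNr opprK. Qed.

Lemma frobZ r U : frob (rscale r U) = `|r| * frob U.
Proof. by rewrite /frob ipZl ipZr mulrA -expr2 sqrtrM ?sqr_ge0 // sqrtr_sqr. Qed.

Lemma frobD U V : frob (U + V) <= frob U + frob V.
Proof.
rewrite -ler_sqr ?nnegrE ?addr_ge0 ?frob_ge0 //.
rewrite frobE ipDl !ipDr sqrrD !frobE (ipC V U) mulr2n.
by have := ip_CS U V; lra.
Qed.

Lemma frobB U V : frob (U - V) <= frob U + frob V.
Proof. by rewrite -(frobN V) frobD. Qed.
End InnerProduct.
End FrobeniusGeometry.

Section FrobeniusMatrix.
Variable R : realType.
Local Notation C := R[i].

(* Submultiplicativity of the Frobenius norm, entrywise from csum_CS. *)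
Lemma frobM n m p (M : 'M[C]_(n, m)) (N : 'M[C]_(m, p)) :
  frob (M *m N) <= frob M * frob N.
Proof.
rewrite -ler_sqr ?nnegrE ?mulr_ge0 ?frob_ge0 // exprMn !frobE !ipE.
rewrite (exchange_big _ _ _ _ _ (fun k i => cdot (M i k) (M i k))) /= mulr_suml.
under [X in _ <= X]eq_bigr do rewrite mulr_sumr.
rewrite [X in _ <= X]exchange_big /=.
apply: ler_sum => j _; apply: ler_sum => i _; rewrite mxE.
exact: csum_CS.
Qed.

Lemma frobM3_le n m q r (X : 'M[C]_(n, m)) (Y : 'M[C]_(m, q)) (Z : 'M[C]_(q, r))
    (a b c : R) :
  frob X <= a -> frob Y <= b -> frob Z <= c -> frob (X *m (Y *m Z)) <= a * (b * c).
Proof.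
move=> hX hY hZ; apply: le_trans (frobM _ _) _.
apply: ler_pM (frob_ge0 _) (frob_ge0 _) hX _.
by apply: le_trans (frobM _ _) _; exact: ler_pM (frob_ge0 _) (frob_ge0 _) hY hZ.
Qed.

Lemma frob_adj n p (X : 'M[C]_(n, p)) : frob (adj X) = frob X.
Proof.
rewrite /frob !ipE exchange_big /=; congr Num.sqrt.
apply: eq_bigr => i _; apply: eq_bigr => k _.
by rewrite /adj !mxE; case: (X _ _) => ? ?; rewrite /cdot /=; ring.
Qed.

Lemma adj1 n : adj (1%:M : 'M[C]_n) = 1%:M.
Proof. by apply/matrixP => i j; rewrite /adj !mxE conjc_nat eq_sym. Qed.

Lemma adjB n p (X Y : 'M[C]_(n, p)) : adj (X - Y) = adj X - adj Y.
Proof. by apply/matrixP => i j; rewrite /adj !mxE rmorphB. Qed.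

(* Bounded sublevel sets: ||X||^2 = <I, X X^*> <= ||I|| (||X X^* - A|| + ||A||). *)
Lemma frob_sqr_le_residual n p (A : 'M[C]_n) (X : 'M[C]_(n, p)) :
  frob X ^+ 2 <= frob (1%:M : 'M[C]_n) * (frob (X *m adj X - A) + frob A).
Proof.
have -> : frob X ^+ 2 = ip (1%:M : 'M[C]_n) (X *m adj X).
  by rewrite frobE /ip adj1 mul1mx mxtrace_mulC.
apply: le_trans (ip_CS _ _) _; apply: ler_wpM2l; first exact: frob_ge0.
by have := frobD (X *m adj X - A) A; rewrite subrK.
Qed.

Lemma cubic_diff n p (X Y : 'M[C]_(n, p)) :
  Y *m adj Y *m Y - X *m adj X *m X =
  (Y - X) *m (adj Y *m Y) + X *m (adj (Y - X) *m Y) + X *m (adj X *m (Y - X)).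
Proof. by rewrite adjB !mulmxBl !mulmxBr !mulmxA !addrA !subrK. Qed.

Lemma gradf_lipschitz n p (A : 'M[C]_n) (X Y : 'M[C]_(n, p)) (B : R) :
  frob X <= B -> frob Y <= B ->
  frob (gradf A Y - gradf A X) <= 2 * (3 * B ^+ 2 + frob A) * frob (Y - X).
Proof.
move=> hX hY.
have scale2 (M : 'M[C]_(n, p)) : frob ((2%:R : C) *: M) = 2 * frob M.
  have -> : (2%:R : C) = ((2 : R)%:C)%C by rewrite rmorph_nat.
  by rewrite -/(rscale 2 M) frobZ ger0_norm.
rewrite /gradf -scalerBr scale2 -mulrA ler_pM2l //.
have -> : (Y *m adj Y - A) *m Y - (X *m adj X - A) *m X =
    (Y *m adj Y *m Y - X *m adj X *m X) - A *m (Y - X).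
  by rewrite !mulmxBl mulmxBr !opprD !opprK addrACA.
rewrite cubic_diff; set D := Y - X.
have hYa : frob (adj Y) <= B by rewrite frob_adj.
have hXa : frob (adj X) <= B by rewrite frob_adj.
have hDa : frob (adj D) <= frob D by rewrite frob_adj.
apply: le_trans (frobB _ _) _; rewrite mulrDl; apply: lerD; last exact: frobM.
have -> : 3 * B ^+ 2 * frob D =
    frob D * (B * B) + B * (frob D * B) + B * (B * frob D) by ring.
apply: le_trans (frobD _ _) _; apply: lerD; last exact: frobM3_le.
by apply: le_trans (frobD _ _) _; apply: lerD; exact: frobM3_le.
Qed.

Lemma fcost_ge0 n p (A : 'M[C]_n) (X : 'M[C]_(n, p)) : 0 <= fcost A X.
Proof. by rewrite /fcost mulr_ge0 ?invr_ge0 ?ler0n ?sqr_ge0. Qed.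
End FrobeniusMatrix.

Section RealFacts.
Variable R : realType.

Lemma harmonic_unbounded (M : R) : exists K, M < \sum_(k < K) (k.+1%:R)^-1.
Proof.
apply: contrapT => bounded; apply: (@dvg_harmonic R).
apply: nondecreasing_is_cvgn.
  by apply: nondecreasing_series => k _ _; exact: harmonic_ge0.
exists M => _ [K _ <-]; rewrite /series /= big_mkord leNgt.
by apply/negP => gtM; apply: bounded; exists K.
Qed.

Lemma sum_le_telescope (a u : nat -> R) K :
  (forall k, a k <= u k - u k.+1) -> \sum_(k < K) a k <= u 0%N - u K.
Proof.
move=> a_le; elim: K => [|K IH]; first by rewrite big_ord0 subrr.
rewrite big_ord_recr /=; apply: le_trans (lerD IH (a_le K)) _.
by rewrite addrA subrK.
Qed.

Lemma limn_einf_eq0 (u : nat -> R) : (forall k, 0 <= u k) ->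
  (forall N (gm : R), 0 < gm -> exists2 k, (N <= k)%N & u k < gm) ->
  limn_einf (fun k => (u k)%:E) = 0%E.
Proof.
move=> u_ge0 small.
rewrite limn_einf_lim.
suff -> : einfs (fun k => (u k)%:E) = fun _ => 0%E by exact: lim_cst.
apply: funext => N; apply: le_anti; apply/andP; split.
  apply/lee_addgt0Pr => gm gm_gt0; rewrite add0e.
  have [k Nk uk] := small N gm gm_gt0.
  apply: (le_trans (ereal_inf_lbound _)); first by exists k.
  by rewrite lee_fin ltW.
by apply/ereal_infP => _ [k _ <-]; rewrite lee_fin.
Qed.

Lemma sigma_bounds (c : R) : 0 < c -> c < 2^-1 ->
  [/\ 1 < (1 - c)^-1, (1 - c)^-1 < 2 & (1 - c)^-1 = 1 + c * (1 - c)^-1].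
Proof.
move=> c_gt0 c_lthalf; have omc_gt0 : 0 < 1 - c by lra.
have sK : (1 - c)^-1 * (1 - c) = 1 by rewrite mulVf // gt_eqF.
have s_gt0 : 0 < (1 - c)^-1 by rewrite invr_gt0.
by set s := (1 - c)^-1 in sK s_gt0 *; split; nra.
Qed.
End RealFacts.

(* Throughout,
   G and G' stand for ||g_k||^2 and ||g_(k+1)||^2, d for <g_k, eta_k>,
   e for <g_(k+1), eta_k>, H for ||eta_k||^2 and G'/G is the
   Fletcher–Reeves coefficient beta_(k+1). *)
Section FletcherReevesScalar.
Variable R : realType.

Lemma le_sqr_add1 (X Q : R) : 0 <= Q -> X ^+ 2 <= Q -> X <= Q + 1.
Proof. by move=> Q_ge0 XQ; nra. Qed.

Lemma le_sqr_div (m G : R) : 0 < m -> m <= G -> G <= G ^+ 2 / m.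
Proof.
by move=> m_gt0 mG; rewrite ler_pdivlMr // expr2 ler_wpM2l // (le_trans (ltW m_gt0)).
Qed.

(* Inductive step of Al-Baali's bound -s G <= d <= (s - 2) G, where
   s = 1 / (1 - c): the new slope is <g', eta'> = -G' + beta e. *)
Lemma al_baali_step (s c G G' d e : R) :
  0 < G -> 0 < G' -> 0 <= c -> 0 < s -> s = 1 + c * s ->
  - s * G <= d <= (s - 2) * G -> `|e| <= c * `|d| ->
  - s * G' <= - G' + (G' / G) * e <= (s - 2) * G'.
Proof.
move=> G_gt0 G'_gt0 c_ge0 s_gt0 sE /andP[d_lb d_ub] e_le.
have d_abs : `|d| <= s * G by rewrite ler_norml; apply/andP; split; nra.
have beta_ge0 : 0 <= G' / G by rewrite divr_ge0 // ltW.
have : `|(G' / G) * e| <= c * s * G'.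
  rewrite normrM ger0_norm //.
  have -> : c * s * G' = (G' / G) * (c * (s * G)) by field; rewrite gt_eqF.
  by rewrite ler_wpM2l // (le_trans e_le) // ler_wpM2l.
rewrite ler_norml => /andP[lb ub].
have sG' : s * G' = G' + c * s * G' by rewrite {1}sE; ring.
by apply/andP; split; nra.
Qed.

(* Inductive step of the growth bound H_k <= c3 (k + 1) / m * G_k^2 on the
   search directions, where m is a lower bound on all G_j and
   c3 = 1 + 2 c s:  H' = G' - 2 beta e + beta^2 H. *)
Lemma direction_growth_step (s c G G' H e m t : R) :
  0 < G -> 0 < m -> m <= G' -> 0 <= c -> 0 <= s ->
  `|e| <= c * (s * G) -> 0 <= t ->
  H <= (1 + 2 * (c * s)) * t / m * G ^+ 2 ->
  G' - 2 * (G' / G) * e + (G' / G) * ((G' / G) * H) <=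
    (1 + 2 * (c * s)) * (t + 1) / m * G' ^+ 2.
Proof.
move=> G_gt0 m_gt0 mG' c_ge0 s_ge0 e_le t_ge0 H_le.
set c3 := 1 + 2 * (c * s).
have G'_gt0 : 0 < G' := lt_le_trans m_gt0 mG'.
have beta_ge0 : 0 <= G' / G by rewrite divr_ge0 // ltW.
have cross : - (2 * (G' / G) * e) <= 2 * c * s * G'.
  have : `|(G' / G) * e| <= c * s * G'.
    rewrite normrM ger0_norm //.
    have -> : c * s * G' = (G' / G) * (c * (s * G)) by field; rewrite gt_eqF.
    by rewrite ler_wpM2l.
  by rewrite ler_norml => /andP[lb _]; nra.
have old : (G' / G) * ((G' / G) * H) <= c3 * t / m * G' ^+ 2.
  have -> : c3 * t / m * G' ^+ 2 = (G' / G) * ((G' / G) * (c3 * t / m * G ^+ 2)).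
    by field; rewrite (gt_eqF m_gt0) (gt_eqF G_gt0).
  by do 2!apply: ler_wpM2l => //.
have new : G' + 2 * c * s * G' <= c3 / m * G' ^+ 2.
  have c3_ge0 : 0 <= c3 by rewrite /c3 addr_ge0 // !mulr_ge0.
  have -> : G' + 2 * c * s * G' = c3 * G' by rewrite /c3; ring.
  by rewrite mulrAC -mulrA ler_wpM2l // le_sqr_div.
have -> : c3 * (t + 1) / m * G' ^+ 2 = c3 * t / m * G' ^+ 2 + c3 / m * G' ^+ 2.
  by field; rewrite (gt_eqF m_gt0).
lra.
Qed.

(* Zoutendijk's estimate for one step: the curvature condition bounds the
   step from below, (1 - c2) (-d) <= L a H, and the Armijo condition turns
   this into a decrease of f of order d^2 / H >= (dl G)^2 / H. *)
Lemma zoutendijk_step (c1 c2 L a d H dl G f f' : R) :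
  0 < c1 -> c2 < 1 -> 0 < L -> 0 < a -> d < 0 -> 0 < dl -> 0 <= G ->
  dl * G <= - d -> (1 - c2) * (- d) <= L * a * H -> f' <= f + c1 * a * d ->
  c1 * (1 - c2) * dl ^+ 2 * G ^+ 2 <= L * H * (f - f').
Proof.
move=> c1_gt0 c2_lt1 L_gt0 a_gt0 d_lt0 dl_gt0 G_ge0 slope step armijo.
have LH_ge0 : 0 <= L * H.
  have : 0 < L * a * H by nra.
  by rewrite mulrAC pmulr_lgt0 // => /ltW.
have curv : (1 - c2) * (d * d) <= L * H * (a * (- d)).
  have nd_ge0 : 0 <= - d by lra.
  by have := ler_wpM2r nd_ge0 step; nra.
have armijo' : c1 * (a * (- d)) <= f - f' by nra.
have slope2 : dl ^+ 2 * G ^+ 2 <= d * d.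
  have : 0 <= dl * G by exact: mulr_ge0 (ltW dl_gt0) G_ge0.
  by nra.
have : c1 * (1 - c2) * (d * d) <= L * H * (f - f').
  by have := ler_wpM2l LH_ge0 armijo'; nra.
have : c1 * (1 - c2) * (dl ^+ 2 * G ^+ 2) <= c1 * (1 - c2) * (d * d).
  by apply: ler_wpM2l => //; nra.
nra.
Qed.
(* Combining the Zoutendijk estimate P G^2 <= L H D with the growth bound
   H <= c3 t / m * G^2 yields a decrease D of order 1 / t. *)
Lemma decrease_lower_bound (P L c3 m t H G D : R) :
  0 < P -> 0 < L -> 0 < c3 -> 0 < m -> 0 < t -> 0 < G ->
  P * G ^+ 2 <= L * H * D -> H <= c3 * t / m * G ^+ 2 -> 0 <= D ->
  P * m / (L * c3) * t^-1 <= D.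
Proof.
move=> P_gt0 L_gt0 c3_gt0 m_gt0 t_gt0 G_gt0 zout growth D_ge0.
have G2_gt0 : 0 < G ^+ 2 by rewrite exprn_gt0.
have : P * G ^+ 2 <= (L * c3 * t / m * D) * G ^+ 2.
  apply: le_trans zout _.
  have -> : L * c3 * t / m * D * G ^+ 2 = L * (c3 * t / m * G ^+ 2) * D.
    by field; rewrite gt_eqF.
  by rewrite ler_wpM2r // ler_wpM2l // ltW.
rewrite ler_pM2r // => P_le.
have -> : P * m / (L * c3) * t^-1 = P / (L * c3 * t / m).
  by field; rewrite !gt_eqF.
rewrite ler_pdivrMr; first by rewrite mulrC.
by rewrite divr_gt0 // !mulr_gt0.
Qed.
End FletcherReevesScalar.

Section FletcherReeves.
Variables (R : realType) (n p : nat) (A : 'M[R[i]]_n).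
Variables (c1 c2 : R) (x eta : nat -> 'M[R[i]]_(n, p)) (alpha : nat -> R).
Hypotheses (c1_gt0 : 0 < c1) (c1_lt_c2 : c1 < c2) (c2_lthalf : c2 < 2^-1).
Hypothesis eta0 : eta 0%N = - gradf A (x 0%N).
Hypothesis x_succ : forall k, x k.+1 = x k + rscale (alpha k) (eta k).
Hypothesis eta_succ : forall k, eta k.+1 = - gradf A (x k.+1)
  + rscale ((frob (gradf A (x k.+1))) ^+ 2 / (frob (gradf A (x k))) ^+ 2) (eta k).
Hypothesis alpha_gt0 : forall k, 0 < alpha k.
Hypothesis wolfe_armijo : forall k, fcost A (x k + rscale (alpha k) (eta k))
  <= fcost A (x k) + c1 * alpha k * ip (gradf A (x k)) (eta k).
Hypothesis wolfe_curvature : forall k,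
  `| ip (gradf A (x k + rscale (alpha k) (eta k))) (eta k) |
    <= c2 * `| ip (gradf A (x k)) (eta k) |.
Hypothesis grad_neq0 : forall k, gradf A (x k) != 0.

Local Notation f k := (fcost A (x k)).
Local Notation g k := (gradf A (x k)).
Local Notation G k := (frob (gradf A (x k)) ^+ 2).
Local Notation d k := (ip (gradf A (x k)) (eta k)).
Local Notation e k := (ip (gradf A (x k.+1)) (eta k)).
Local Notation H k := (ip (eta k) (eta k)).
Local Notation sigma := ((1 - c2)^-1).

Let c2_gt0 : 0 < c2. Proof. exact: lt_trans c1_gt0 c1_lt_c2. Qed.
Let c2_lt1 : c2 < 1.
Proof. by apply: lt_trans c2_lthalf _; rewrite invf_lt1 ?ltr1n ?ltr0n. Qed.

Lemma G_gt0 k : 0 < G k.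
Proof. by rewrite exprn_gt0 // frob_gt0. Qed.

Lemma armijo k : f k.+1 <= f k + c1 * alpha k * d k.
Proof. by rewrite x_succ. Qed.

Lemma curvature k : `|e k| <= c2 * `|d k|.
Proof. by rewrite x_succ. Qed.

Lemma slope_succ k : d k.+1 = - G k.+1 + (G k.+1 / G k) * e k.
Proof. by rewrite eta_succ ipDr ipNr ipZr -frobE. Qed.

Lemma length_succ k : H k.+1 =
  G k.+1 - 2 * (G k.+1 / G k) * e k + (G k.+1 / G k) * ((G k.+1 / G k) * H k).
Proof.
rewrite eta_succ ipDl !ipDr ipNl !ipNr ipZl !ipZr ipNl ipZl opprK -frobE.
by rewrite (ipC (eta k)); ring.
Qed.

Lemma al_baali k : - sigma * G k <= d k <= (sigma - 2) * G k.
Proof.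
have [s_gt1 _ sE] := sigma_bounds c2_gt0 c2_lthalf.
elim: k => [|k IH].
  have G0_gt0 := G_gt0 0.
  by rewrite eta0 ipNr -frobE; apply/andP; split; nra.
rewrite slope_succ.
exact: al_baali_step (G_gt0 k) (G_gt0 k.+1) (ltW c2_gt0) (lt_trans ltr01 s_gt1)
  sE IH (curvature k).
Qed.

Lemma sufficient_descent k : d k < 0 /\ (2 - sigma) * G k <= - d k.
Proof.
have [_ s_lt2 _] := sigma_bounds c2_gt0 c2_lthalf.
have /andP[_ ub] := al_baali k; have Gk_gt0 := G_gt0 k.
by split; nra.
Qed.

Lemma f_decrease k : f k.+1 <= f k.
Proof.
have [d_lt0 _] := sufficient_descent k.
apply: le_trans (armijo k) _.
by rewrite gerDl pmulr_rle0 ?mulr_gt0 // ltW.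
Qed.

Lemma f_le_f0 k : f k <= f 0.
Proof. by elim: k => [//|k IH]; exact: le_trans (f_decrease k) IH. Qed.

Definition radius : R :=
  frob (1%:M : 'M[R[i]]_n) * (2 * f 0 + 1 + frob A) + 1.

Lemma radius_ge1 : 1 <= radius.
Proof.
rewrite /radius lerDr mulr_ge0 ?frob_ge0 //.
by have := fcost_ge0 A (x 0); have := frob_ge0 A; lra.
Qed.

(* Every iterate lies in that ball, by frob_sqr_le_residual and f <= f(x_0). *)
Lemma iterate_bounded k : frob (x k) <= radius.
Proof.
have f0_ge0 : 0 <= 2 * f 0 by rewrite mulr_ge0 ?fcost_ge0.
have residual_le : frob (x k *m adj (x k) - A) <= 2 * f 0 + 1.
  by apply: le_sqr_add1 f0_ge0 _; have := f_le_f0 k; rewrite {1}/fcost; lra.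
apply: le_sqr_add1; first by rewrite mulr_ge0 ?frob_ge0 // !addr_ge0 ?frob_ge0.
apply: le_trans (frob_sqr_le_residual A (x k)) _.
by rewrite ler_wpM2l ?frob_ge0 // lerD2r.
Qed.

Definition lipschitz : R := 2 * (3 * radius ^+ 2 + frob A).

Lemma lipschitz_gt0 : 0 < lipschitz.
Proof.
have r2_gt0 : 0 < radius ^+ 2 by rewrite exprn_gt0 // (lt_le_trans ltr01 radius_ge1).
by rewrite /lipschitz; have := frob_ge0 A; lra.
Qed.

(* Lower bound on the step length from the curvature condition:
   (1 - c2)(-d_k) <= <g_(k+1) - g_k, eta_k> <= L alpha_k ||eta_k||^2. *)
Lemma step_lower_bound k : (1 - c2) * (- d k) <= lipschitz * alpha k * H k.
Proof.
have [d_lt0 _] := sufficient_descent k.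
have e_ge : c2 * d k <= e k.
  have d_abs : `|d k| = - d k := ltr0_norm d_lt0.
  have := curvature k; rewrite ler_norml => /andP[+ _].
  by rewrite d_abs mulrN opprK.
have lip : frob (g k.+1 - g k) <= lipschitz * (alpha k * frob (eta k)).
  have step_len : frob (x k.+1 - x k) = alpha k * frob (eta k).
    by rewrite x_succ addrAC subrr add0r frobZ ger0_norm // ltW.
  rewrite -step_len.
  exact: gradf_lipschitz (iterate_bounded k) (iterate_bounded k.+1).
have cs : e k - d k <= frob (g k.+1 - g k) * frob (eta k).
  by rewrite -ipBl; exact: ip_CS.
have cs_lip : frob (g k.+1 - g k) * frob (eta k) <= lipschitz * alpha k * H k.
  rewrite -frobE expr2; apply: le_trans (ler_wpM2r (frob_ge0 (eta k)) lip) _.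
  by rewrite !mulrA.
apply: le_trans (le_trans cs cs_lip).
by rewrite mulrBl mul1r mulrN opprK addrC lerD2r.
Qed.

Lemma zoutendijk k : c1 * (1 - c2) * (2 - sigma) ^+ 2 * G k ^+ 2 <=
  lipschitz * H k * (f k - f k.+1).
Proof.
have [_ s_lt2 _] := sigma_bounds c2_gt0 c2_lthalf.
have [d_lt0 slope] := sufficient_descent k.
apply: zoutendijk_step c1_gt0 c2_lt1 lipschitz_gt0 (alpha_gt0 k) d_lt0 _ _ slope
  (step_lower_bound k) (armijo k); first by rewrite subr_gt0.
exact: ltW (G_gt0 k).
Qed.

Lemma growth_const_ge1 : 1 <= 1 + 2 * (c2 * sigma).
Proof.
have [s_gt1 _ _] := sigma_bounds c2_gt0 c2_lthalf.
by rewrite lerDl !mulr_ge0 // ltW // (lt_trans ltr01 s_gt1).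
Qed.

Lemma direction_growth (m : R) : 0 < m -> (forall j, m <= G j) ->
  forall k, H k <= (1 + 2 * (c2 * sigma)) * k.+1%:R / m * G k ^+ 2.
Proof.
move=> m_gt0 mG.
have [s_gt1 _ _] := sigma_bounds c2_gt0 c2_lthalf.
have s_ge0 : 0 <= sigma := ltW (lt_trans ltr01 s_gt1).
elim=> [|k IH].
  rewrite eta0 ipNl ipNr opprK -frobE mulr1 mulrAC -mulrA.
  apply: le_trans (le_sqr_div m_gt0 (mG 0%N)) _.
  by rewrite ler_peMl ?growth_const_ge1 // divr_ge0 ?sqr_ge0 // ltW.
have -> : k.+2%:R = k.+1%:R + 1 :> R by rewrite natr1.
have /andP[lb ub] := al_baali k; have Gk_gt0 := G_gt0 k.
have d_abs : `|d k| <= sigma * G k by rewrite ler_norml; apply/andP; split; nra.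
have e_le := le_trans (curvature k) (ler_wpM2l (ltW c2_gt0) d_abs).
rewrite length_succ.
exact: direction_growth_step Gk_gt0 m_gt0 (mG k.+1) (ltW c2_gt0) s_ge0 e_le
  (ler0n _ _) IH.
Qed.

Lemma G_lower_bound_prefix N :
  exists2 m : R, 0 < m & forall j, (j < N)%N -> m <= G j.
Proof.
elim: N => [|N [m m_gt0 mG]]; first by exists 1.
exists (Num.min m (G N)); first by rewrite lt_min m_gt0 G_gt0.
move=> j; rewrite ltnS leq_eqVlt ge_min => /orP[/eqP->|jN].
  by rewrite lexx orbT.
by rewrite mG.
Qed.

Definition decrease_rate (m : R) : R :=
  c1 * (1 - c2) * (2 - sigma) ^+ 2 * m / (lipschitz * (1 + 2 * (c2 * sigma))).

Lemma decrease_rate_gt0 (m : R) : 0 < m -> 0 < decrease_rate m.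
Proof.
move=> m_gt0; have [_ s_lt2 _] := sigma_bounds c2_gt0 c2_lthalf.
apply: divr_gt0; first by rewrite !mulr_gt0 ?exprn_gt0 ?subr_gt0.
exact: mulr_gt0 lipschitz_gt0 (lt_le_trans ltr01 growth_const_ge1).
Qed.

Lemma harmonic_decrease (m : R) : 0 < m -> (forall j, m <= G j) ->
  forall k, decrease_rate m * (k.+1%:R)^-1 <= f k - f k.+1.
Proof.
move=> m_gt0 mG k.
have [_ s_lt2 _] := sigma_bounds c2_gt0 c2_lthalf.
apply: decrease_lower_bound (zoutendijk k) (direction_growth m_gt0 mG k) _ => //.
- by rewrite !mulr_gt0 ?exprn_gt0 ?subr_gt0.
- exact: lipschitz_gt0.
- exact: lt_le_trans ltr01 growth_const_ge1.
- exact: G_gt0.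
- by rewrite subr_ge0 f_decrease.
Qed.

(* Main result: liminf ||g_k|| = 0.  Otherwise ||g_k|| >= gm > 0 from some N
   on, all ||g_k||^2 are bounded below, and summing the harmonic decrease
   contradicts f >= 0. *)
Lemma gradient_liminf : limn_einf (fun k => (frob (g k))%:E) = 0%E.
Proof.
apply: limn_einf_eq0 => [k|N gm gm_gt0]; first exact: frob_ge0.
apply: contrapT => far.
have gk_ge k : (N <= k)%N -> gm <= frob (g k).
  by move=> Nk; rewrite leNgt; apply/negP => gk_lt; apply: far; exists k.
have [m0 m0_gt0 m0_le] := G_lower_bound_prefix N.
pose m := Num.min m0 (gm ^+ 2).
have m_gt0 : 0 < m by rewrite lt_min m0_gt0 exprn_gt0.
have mG j : m <= G j.
  rewrite ge_min; case: (ltnP j N) => [jN|Nj]; first by rewrite m0_le.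
  by rewrite lerXn2r ?nnegrE ?gk_ge ?orbT // ?frob_ge0 // ltW.
have telescoped K : decrease_rate m * \sum_(k < K) (k.+1%:R)^-1 <= f 0 - f K.
  rewrite mulr_sumr.
  apply: (@sum_le_telescope _ (fun k => decrease_rate m * (k.+1%:R)^-1) (fun k => f k)).
  exact: harmonic_decrease.
have [K K_gt] := harmonic_unbounded (f 0 / decrease_rate m).
move: K_gt; rewrite ltr_pdivrMr ?decrease_rate_gt0 // mulrC => K_gt.
have := lt_le_trans K_gt (telescoped K).
by rewrite ltNge gerBl fcost_ge0.
Qed.
End FletcherReeves.

Unset Implicit Arguments.
Set Strict Implicit.

Theorem theorem4p5 (R : realType) (n p : nat) (A : 'M[R[i]]_n)
  (c1 c2 : R) (x eta : nat -> 'M[R[i]]_(n, p)) (alpha : nat -> R) :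
  hermitianC A ->
  0 < c1 -> c1 < c2 -> c2 < 2^-1 ->
  eta 0%N = - gradf A (x 0%N) ->
  (forall k, x k.+1 = x k + rscale (alpha k) (eta k)) ->
  (forall k, eta k.+1 = - gradf A (x k.+1)
       + rscale ((frob (gradf A (x k.+1))) ^+ 2 / (frob (gradf A (x k))) ^+ 2)
                (eta k)) ->
  (forall k, 0 < alpha k) ->
  (forall k, fcost A (x k + rscale (alpha k) (eta k))
             <= fcost A (x k) + c1 * alpha k * ip (gradf A (x k)) (eta k)) ->
  (forall k, `| ip (gradf A (x k + rscale (alpha k) (eta k))) (eta k) |
             <= c2 * `| ip (gradf A (x k)) (eta k) |) ->
  (forall k, fullrank (x k)) ->
  (forall k, gradf A (x k) != 0) ->
  limn_einf (fun k => (frob (gradf A (x k)))%:E) = 0%E.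
Proof.
move=> _ c1_gt0 c1_lt_c2 c2_lthalf eta0 x_succ eta_succ alpha_gt0 armijo curv _ g_neq0.
exact: (gradient_liminf c1_gt0 c1_lt_c2 c2_lthalf eta0 x_succ eta_succ alpha_gt0
  armijo curv g_neq0).
Qed.
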